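(* Let $n\ge2$, $F\in\mathcal{F}_{n,n-1}$, $1\le k\le n$, and $a,b\in I_{F,k}$ with $a\ne b$. Then the function $\xi_{a,b}(\lambda)=\lambda_a-\lambda_b$ on $\mathbb{R}^{n+1}$ lies in the real linear span of the functions $\xi_{F,l}(\lambda)=\lambda_{F_l}-\lambda_{F_l^-}$, $k\le l\le n$.
   Context: Coordinates of $\mathbb{R}^{n+1}$ are indexed $\lambda=(\lambda_0,\dots,\lambda_n)$. The set $\mathcal{F}_{n,n-1}$ consists of sequences $F=(i_1,\sigma_1,\dots,i_{n-1},\sigma_{n-1})$ with $\sigma_l\in\{+,-\}$ built inductively: $I_{F,1}=\{0,\dots,n\}$; for each $1\le l\le n-1$, $i_l$ is an element of $I_{F,l}$ which is not its smallest element; writing $F_l:=i_l$ and $F_l^-$ for the largest element of $I_{F,l}$ smaller than $i_l$, set $I_{F,l+1}=I_{F,l}\setminus\{F_l\}$ if $\sigma_l=+$ and $I_{F,l+1}=I_{F,l}\setminus\{F_l^-\}$ if $\sigma_l=-$. The set $I_{F,n}$ has two elements; $F_n^-$ denotes the smaller and $F_n$ the larger. *)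

From HB Require Import structures.
From mathcomp Require Import all_boot all_order all_algebra.
Set Implicit Arguments. Unset Strict Implicit. Unset Printing Implicit Defensive.
Import Order.TTheory GRing.Theory Num.Theory.

(* Coordinates of R^{n+1} are indexed by 'I_n.+1 = {0,...,n}.
   An element F = (i_1,s_1,...,i_{n-1},s_{n-1}) of F_{n,n-1} is given by
   two sequences  i : nat -> 'I_n.+1  and  s : nat -> bool  (true = '+',
   false = '-'), of which only the values at l = 1..n-1 matter. *)

Definition predIn (n : nat) (I : {set 'I_n.+1}) (x : 'I_n.+1) : 'I_n.+1 :=
  inord (\max_(j in I | (j < x)%N) (nat_of_ord j)).

(* I_{F,l}; I_{F,0} is an unused dummy, I_{F,1} = {0,...,n}. *)
Fixpoint IF (n : nat) (i : nat -> 'I_n.+1) (s : nat -> bool) (l : nat)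
  : {set 'I_n.+1} :=
  match l with
  | 0 => setT
  | l'.+1 =>
      if l' is 0 then setT
      else let I := IF i s l' in
           I :\ (if s l' then i l' else predIn I (i l'))
  end.

Definition in_Fnn1 (n : nat) (i : nat -> 'I_n.+1) (s : nat -> bool) : Prop :=
  forall l : nat, (1 <= l <= n.-1)%N ->
    i l \in IF i s l /\ exists2 j : 'I_n.+1, j \in IF i s l & (j < i l)%N.

Definition Fl (n : nat) (i : nat -> 'I_n.+1) (s : nat -> bool) (l : nat)
  : 'I_n.+1 :=
  if (l < n)%N then i l
  else inord (\max_(j in IF i s n) (nat_of_ord j)).

Definition Flm (n : nat) (i : nat -> 'I_n.+1) (s : nat -> bool) (l : nat)
  : 'I_n.+1 :=
  predIn (IF i s l) (Fl i s l).

Definition xiF (R : ringType) (n : nat) (i : nat -> 'I_n.+1) (s : nat -> bool)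
  (l : nat) (lam : 'I_n.+1 -> R) : R :=
  lam (Fl i s l) - lam (Flm i s l).

From HB Require Import structures.
From mathcomp Require Import all_boot all_order all_algebra.
From mathcomp Require Import zify.
Set Implicit Arguments.
Unset Strict Implicit.
Unset Printing Implicit Defensive.
Import Order.TTheory GRing.Theory Num.Theory.
Local Open Scope ring_scope.

(* Descending induction on k: all differences lambda_x - lambda_y with x, y in
   I_{F,k} lie in the span of xi_{F,l}, k <= l <= n.  For k = n the set
   I_{F,n} = {F_n^-, F_n} contributes only +-xi_{F,n}.  For k < n the step from
   I_{F,k} to I_{F,k+1} removes one element r of {F_k, F_k^-} and keeps the other
   one q, and lambda_r - lambda_q = +-xi_{F,k}; every other element of I_{F,k}
   lies in I_{F,k+1}, so its difference with q is covered by induction. *)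

Definition in_span (R : pzRingType) (T : Type) (g : nat -> T -> R) (m n : nat)
    (f : T -> R) :=
  exists c : nat -> R, forall x, f x = \sum_(m <= l < n) c l * g l x.

Section Span.
Variables (R : pzRingType) (T : Type) (g : nat -> T -> R) (m n : nat).

Lemma eq_in_span (f f' : T -> R) : f =1 f' -> in_span g m n f' -> in_span g m n f.
Proof. by move=> eq_f [c Hc]; exists c => x; rewrite eq_f Hc. Qed.

Lemma in_span0 : in_span g m n (fun => 0).
Proof. by exists (fun => 0) => x; rewrite big1 // => l _; rewrite mul0r. Qed.

Lemma in_spanB (f f' : T -> R) :
  in_span g m n f -> in_span g m n f' -> in_span g m n (fun x => f x - f' x).
Proof.
move=> [c Hc] [c' Hc']; exists (fun l => c l - c' l) => x.
by rewrite Hc Hc' -sumrB; apply: eq_bigr => l _; rewrite mulrBl.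
Qed.

Lemma in_spanN (f : T -> R) : in_span g m n f -> in_span g m n (fun x => - f x).
Proof.
by move=> Hf; apply: eq_in_span (in_spanB in_span0 Hf) => x; rewrite sub0r.
Qed.

Lemma in_span_gen l : (m <= l < n)%N -> in_span g m n (g l).
Proof.
move=> lP; exists (fun j => (j == l)%:R) => x.
rewrite (bigD1_seq l) ?mem_index_iota ?iota_uniq //= eqxx mul1r big1 ?addr0 //.
by move=> j /negPf ->; rewrite mul0r.
Qed.

Lemma in_span_widen m' (f : T -> R) :
  (m' <= m <= n)%N -> in_span g m n f -> in_span g m' n f.
Proof.
move=> /andP[m'm mn] [c Hc]; exists (fun l => if (l < m)%N then 0 else c l) => x.
rewrite Hc (big_cat_nat m'm mn) /= [X in _ = X + _]big_nat_cond.
rewrite [X in _ = X + _]big1 ?add0r.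
  by apply: eq_big_nat => l /andP[/leq_gtF ->].
by move=> l /andP[/andP[_ ->] _]; rewrite mul0r.
Qed.

End Span.

Lemma in_span_sub_anchor (R : pzRingType) (J : Type) (g : nat -> (J -> R) -> R)
    (m n : nat) (x y z : J) :
  in_span g m n (fun lam => lam x - lam z) ->
  in_span g m n (fun lam => lam y - lam z) ->
  in_span g m n (fun lam => lam x - lam y).
Proof.
move=> xz yz; apply: eq_in_span (in_spanB xz yz) => lam.
by rewrite opprB addrA subrK.
Qed.

Lemma mem_card2 (T : finType) (A : {set T}) (u v w : T) :
  #|A| = 2 -> u \in A -> v \in A -> u != v -> w \in A -> (w == u) || (w == v).
Proof.
move=> cardA uA vA uv wA.
have uvA : [set u; v] \subset A by rewrite subUset !sub1set uA vA.
have /subset_cardP/(_ uvA)/(_ w) : #|[set u; v]| = #|A|.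
  by rewrite cards2 uv cardA.
by rewrite wA !inE.
Qed.

Section PredIn.
Variables (n : nat) (I : {set 'I_n.+1}) (x : 'I_n.+1).
Hypothesis below_x : exists2 j : 'I_n.+1, j \in I & (j < x)%N.

Let predIn_attained :
  exists2 j : 'I_n.+1, (j \in I) && (j < x)%N & predIn I x = j.
Proof.
case: below_x => j jI jx.
have below_x_nonempty : (0 < #|[pred j : 'I_n.+1 | (j \in I) && (j < x)%N]|)%N.
  by apply/card_gt0P; exists j; rewrite inE jI.
have [j0 j0P max_j0] := eq_bigmax_cond (@nat_of_ord n.+1) below_x_nonempty.
by exists j0; rewrite // /predIn max_j0 inord_val.
Qed.

Lemma predIn_mem : predIn I x \in I.
Proof. by case: predIn_attained => j /andP[jI _] ->. Qed.

Lemma predIn_lt : (predIn I x < x)%N.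
Proof. by case: predIn_attained => j /andP[_ jx] ->. Qed.

End PredIn.

Section MaxIn.
Variables (n : nat) (I : {set 'I_n.+1}) (z : 'I_n.+1).
Hypothesis zI : z \in I.

Let maxIn_attained :
  exists2 j : 'I_n.+1, j \in I & \max_(i in I) nat_of_ord i = j.
Proof.
have I_nonempty : (0 < #|I|)%N by apply/card_gt0P; exists z.
by have [j0] := eq_bigmax_cond (@nat_of_ord n.+1) I_nonempty; exists j0.
Qed.

Lemma inord_bigmax_mem : inord (\max_(j in I) (nat_of_ord j)) \in I.
Proof. by case: maxIn_attained => j jI ->; rewrite inord_val. Qed.

Lemma leq_inord_bigmax y :
  y \in I -> (y <= (inord (\max_(j in I) (nat_of_ord j)) : 'I_n.+1))%N.
Proof.
case: maxIn_attained => j _ max_j yI.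
by rewrite max_j inord_val -max_j; apply: leq_bigmax_cond.
Qed.

End MaxIn.

Section Flag.
Variables (R : nzRingType) (n : nat) (i : nat -> 'I_n.+1) (s : nat -> bool).

Lemma IFS k : (1 <= k)%N ->
  IF i s k.+1 = IF i s k :\ (if s k then i k else predIn (IF i s k) (i k)).
Proof. by case: k. Qed.

Hypothesis F_in_Fnn1 : in_Fnn1 i s.

Lemma card_IF l : (1 <= l <= n)%N -> #|IF i s l| = (n.+2 - l)%N.
Proof.
elim: l => [//|[|l] IH /andP[l1 ln]]; first by rewrite cardsT card_ord subn1.
have [|ikI below_ik] := F_in_Fnn1 (l := l.+1); first by lia.
rewrite IFS //; set r := if s l.+1 then _ else _.
have rI : r \in IF i s l.+1 by rewrite /r; case: (s l.+1); rewrite ?predIn_mem.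
have := cardsD1 r (IF i s l.+1); rewrite rI add1n IH; last by lia.
by move: #|_ :\ r| => m; lia.
Qed.

Definition diffs_in_span k := forall x y, x \in IF i s k -> y \in IF i s k ->
  in_span (xiF i s) k n.+1 (fun lam : 'I_n.+1 -> R => lam x - lam y).

Lemma diffs_in_span_anchor k q :
  (forall w, w \in IF i s k ->
     in_span (xiF i s) k n.+1 (fun lam : 'I_n.+1 -> R => lam w - lam q)) ->
  diffs_in_span k.
Proof.
by move=> anchor x y xI yI; apply: in_span_sub_anchor (anchor x xI) (anchor y yI).
Qed.

Lemma diffs_in_span_last : (0 < n)%N -> diffs_in_span n.
Proof.
move=> n_gt0; have card2 : #|IF i s n| = 2 by rewrite card_IF ?n_gt0 //; lia.
have [z zI] : exists z, z \in IF i s n by apply/card_gt0P; rewrite card2.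
have hiI : Fl i s n \in IF i s n by rewrite /Fl ltnn (inord_bigmax_mem zI).
have below_hi : exists2 j : 'I_n.+1, j \in IF i s n & (j < Fl i s n)%N.
  have /card_gt0P[j] : (0 < #|IF i s n :\ Fl i s n|)%N.
    by have := cardsD1 (Fl i s n) (IF i s n); rewrite hiI card2 add1n => -[<-].
  rewrite !inE => /andP[j_ne jI]; exists j; rewrite // ltn_neqAle val_eqE j_ne.
  by rewrite /Fl ltnn (leq_inord_bigmax zI).
have loI : Flm i s n \in IF i s n := predIn_mem below_hi.
have lo_lt_hi : (Flm i s n < Fl i s n)%N := predIn_lt below_hi.
have hi_ne_lo : Fl i s n != Flm i s n by rewrite -val_eqE gtn_eqF.
apply: (@diffs_in_span_anchor _ (Flm i s n)) => w wI.
case/orP: (mem_card2 card2 hiI loI hi_ne_lo wI) => /eqP->.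
  by apply: (in_span_gen (xiF i s)); rewrite leqnn /=.
by apply: eq_in_span (in_span0 _ _ _) => lam; rewrite subrr.
Qed.

Lemma diffs_in_span_step k :
  (1 <= k < n)%N -> diffs_in_span k.+1 -> diffs_in_span k.
Proof.
move=> /andP[k_gt0 k_lt_n] IH.
have [|ikI below_ik] := F_in_Fnn1 (l := k); first by lia.
set p := predIn (IF i s k) (i k).
have pI : p \in IF i s k := predIn_mem below_ik.
have p_ne_ik : p != i k by rewrite -val_eqE ltn_eqF ?predIn_lt.
have xi_k lam : xiF i s k lam = lam (i k) - lam p by rewrite /xiF /Flm /Fl k_lt_n.
have IF_Sk := IFS k_gt0; set r := (if s k then _ else _) in IF_Sk.
set q := if s k then p else i k.
have qI : q \in IF i s k.+1.
  rewrite IF_Sk !inE /r /q.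
  by case: (s k); rewrite ?pI ?ikI ?p_ne_ik // eq_sym p_ne_ik.
apply: (@diffs_in_span_anchor _ q) => w wI.
have [wI' | ] := boolP (w \in IF i s k.+1).
  by apply: in_span_widen (IH _ _ wI' qI); rewrite leqnSn ltnS ltnW.
rewrite IF_Sk !inE wI andbT negbK => /eqP->; rewrite /r /q.
have xi_gen : in_span (xiF i s) k n.+1 (xiF (R := R) i s k).
  by apply: in_span_gen; rewrite leqnn ltnS ltnW.
case: (s k); first by apply: eq_in_span xi_gen => lam; rewrite xi_k.
by apply: eq_in_span (in_spanN xi_gen) => lam; rewrite xi_k opprB.
Qed.

Lemma diffs_in_span_from k : (1 <= k <= n)%N -> diffs_in_span k.
Proof.
move=> /andP[k_gt0 k_le_n]; move: {2}(n - k)%N (erefl (n - k)%N) => d.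
elim: d k k_gt0 k_le_n => [|d IH] k k_gt0 k_le_n d_def.
  have -> : k = n by lia.
  by apply: diffs_in_span_last; lia.
by apply: diffs_in_span_step; [lia | apply: IH; lia].
Qed.

End Flag.

Theorem lemma5p8 (R : realFieldType) (n : nat) (i : nat -> 'I_n.+1)
  (s : nat -> bool) (k : nat) (a b : 'I_n.+1) :
  (2 <= n)%N -> in_Fnn1 i s -> (1 <= k <= n)%N ->
  a \in IF i s k -> b \in IF i s k -> a != b ->
  exists c : nat -> R, forall lam : 'I_n.+1 -> R,
    lam a - lam b = \sum_(k <= l < n.+1) c l * xiF i s l lam.
Proof.
move=> _ F_in_Fnn1 kP aI bI _.
exact: (diffs_in_span_from R F_in_Fnn1 kP aI bI).
Qed.
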